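(* Let $\rho$ be a density matrix on $\mathbb{C}^d$ and $H$ a Hermitian operator on $\mathbb{C}^d$, and suppose $F_Q>0$. Then for every integer $n\ge 1$, $$\mathcal{E}_n^{(\mathsf{Kry})}\coloneqq\frac{\left|B_n^{(\mathsf{Kry})}-F_Q\right|}{F_Q}\le 4\left[\frac{\sqrt{\kappa(\rho)}-1}{\sqrt{\kappa(\rho)}+1}\right]^{2n},$$ where $\kappa(\rho)=p_{\max}/p_{\min}$ if $\rho$ is full rank and $\kappa(\rho)=2p_{\max}/p_{\min}$ otherwise, with $p_{\max}$ and $p_{\min}$ the largest and smallest nonzero eigenvalues of $\rho$. In particular, $\mathcal{E}_n^{(\mathsf{Kry})}$ decreases exponentially to zero as $n$ increases.
   Context: Write $\rho=\sum_k p_k|k\rangle\langle k|$ (spectral decomposition, orthonormal eigenbasis $\{|k\rangle\}$). The quantum Fisher information (QFI) of $\rho$ with respect to $H$ is $F_Q=2\sum_{k,l:\,p_k+p_l>0}\frac{(p_k-p_l)^2}{p_k+p_l}|\langle k|H|l\rangle|^2$. Let $\mathcal{X}$ be the real vector space of Hermitian operators $X$ with $\langle k|X|l\rangle=0$ whenever $p_k=p_l=0$, equipped with the inner product $\langle X,Y\rangle_\rho=\mathrm{tr}[\rho(XY+YX)/2]$ and norm $\|X\|_\rho=\sqrt{\langle X,X\rangle_\rho}$. Let $\mathcal{R}_\rho(X)=\frac12(\rho X+X\rho)$. The symmetric logarithmic derivative (SLD) $L$ is the unique $L\in\mathcal{X}$ with $\mathcal{R}_\rho(L)=i[\rho,H]$;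 one has $F_Q=\|L\|_\rho^2$. The Krylov subspace of order $n$ is $\mathcal{K}_n=\mathrm{span}\{i[\rho,H],\mathcal{R}_\rho(i[\rho,H]),\dots,\mathcal{R}_\rho^{n-1}(i[\rho,H])\}\subseteq\mathcal{X}$ (real span). Let $L_n\in\mathcal{K}_n$ be the element of $\mathcal{K}_n$ closest to $L$ in the norm $\|\cdot\|_\rho$ (i.e., the $\langle\cdot,\cdot\rangle_\rho$-orthogonal projection of $L$ onto $\mathcal{K}_n$). The $n$-th Krylov bound is $B_n^{(\mathsf{Kry})}=\|L_n\|_\rho^2$. *)

From HB Require Import structures.
From mathcomp Require Import all_boot all_order all_algebra.
Set Implicit Arguments.
Unset Strict Implicit.
Unset Printing Implicit Defensive.
Import Order.TTheory GRing.Theory Num.Theory.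
Local Open Scope ring_scope.
Local Open Scope sesquilinear_scope.

Section Krylov.
Context {C : numClosedFieldType} {d : nat}.
Implicit Types (U X Y H rho : 'M[C]_d) (p : 'I_d -> C).

(* rho = sum_k p_k |k><k|, where |k> is the k-th column of the unitary U *)
Definition spec_mx U p : 'M[C]_d := U *m diag_mx (\row_k p k) *m U ^t*.

Definition mel U X (k l : 'I_d) : C := (U ^t* *m X *m U) k l.

Definition QFI U p H : C :=
  2 * \sum_(k < d) \sum_(l < d | 0 < p k + p l)
        (p k - p l) ^+ 2 / (p k + p l) * `|mel U H k l| ^+ 2.

Definition in_calX U p X : Prop :=
  X \is hermsymmx /\
  forall k l : 'I_d, p k = 0 -> p l = 0 -> mel U X k l = 0.

Definition ip_rho rho X Y : C := \tr (rho *m (2%:R^-1 *: (X *m Y + Y *m X))).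
Definition norm_rho rho X : C := sqrtC (ip_rho rho X X).

Definition R_rho rho X : 'M[C]_d := 2%:R^-1 *: (rho *m X + X *m rho).

Definition icomm rho H : 'M[C]_d := 'i *: (rho *m H - H *m rho).

Definition is_SLD U p rho H L : Prop :=
  in_calX U p L /\ R_rho rho L = icomm rho H.

Definition in_krylov rho H (n : nat) X : Prop :=
  exists c : 'I_n -> C, (forall j, c j \is Num.real) /\
    X = \sum_(j < n) c j *: iter j (R_rho rho) (icomm rho H).

Definition is_krylov_approx rho H (n : nat) L Ln : Prop :=
  in_krylov rho H n Ln /\
  forall Y, in_krylov rho H n Y -> norm_rho rho (L - Ln) <= norm_rho rho (L - Y).

Definition p_max p : C := \big[Num.max/0]_(k < d) p k.
Definition p_min p : C := \big[Num.min/p_max p]_(k < d | p k != 0) p k.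

Definition kappa p : C :=
  if [forall k, p k != 0] then p_max p / p_min p else 2%:R * p_max p / p_min p.

End Krylov.

(* Everything is computed entrywise in the eigenbasis of rho.  There R_rho
   multiplies the (k, l) entry by the mean (p_k + p_l)/2, so the elements of
   K_n have entries P((p_k + p_l)/2) <k|i[rho,H]|l> for real polynomials P of
   degree < n, while the SLD has entries <k|i[rho,H]|l> / ((p_k + p_l)/2).
   Hence ||L - X||_rho^2 is the squared L^2 distance from x |-> 1/x to P for a
   discrete measure carried by the means with p_k <> p_l, which all lie in
   [p_min, p_max] (full rank) or [p_min/2, p_max].  The best approximation L_n
   is also best along its own line t L_n, so L - L_n is orthogonal to L_n and
   F_Q - B_n = ||L - L_n||^2.  Taking P = (1 - q)/x for the shifted Chebyshev
   polynomial q with q(0) = 1 and |q| <= 2 r^n on that interval, where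
   r = (sqrt kappa - 1)/(sqrt kappa + 1), bounds the error by 4 r^(2n) F_Q. *)

From HB Require Import structures.
From mathcomp Require Import all_boot all_order all_algebra.
From mathcomp Require Import ring.
Set Implicit Arguments.
Unset Strict Implicit.
Unset Printing Implicit Defensive.
Import Order.TTheory GRing.Theory Num.Theory.
Local Open Scope ring_scope.
Local Open Scope sesquilinear_scope.

Section Chebyshev.
Variable C : numClosedFieldType.

(* The closure instances of [polyOver S] are found for [S := real_num_pred],
   not for the qualifier [Num.real] that unfolds to it. *)
Lemma polyOver_realE (q : {poly C}) :
  (q \is a polyOver Num.real) = (q \is a polyOver Num.Def.real_num_pred).
Proof. by []. Qed.

Fixpoint chebyshev (m : nat) : {poly C} :=
  match m with
  | 0 => 1
  | 1 => 'X
  | (m'.+1 as m1).+1 => 'X * chebyshev m1 *+ 2 - chebyshev m'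
  end.

Lemma chebyshevSS m : chebyshev m.+2 = 'X * chebyshev m.+1 *+ 2 - chebyshev m.
Proof. by []. Qed.

Lemma size_chebyshev m : (size (chebyshev m) <= m.+1)%N.
Proof.
suff: (size (chebyshev m) <= m.+1)%N /\ (size (chebyshev m.+1) <= m.+2)%N by case.
elim: m => [|m [IHm IHm1]]; first by rewrite /= size_poly1 size_polyX.
split=> //; rewrite chebyshevSS (leq_trans (size_polyD _ _)) // size_polyN.
rewrite geq_max (leq_trans IHm (leqW (leqnSn _))) andbT -scaler_nat.
by rewrite (leq_trans (size_scale_leq _ _)) // (leq_trans (size_polyMleq _ _)) // size_polyX.
Qed.

Lemma chebyshev_real m : chebyshev m \is a polyOver Num.real.
Proof.
rewrite polyOver_realE.
suff: (chebyshev m \is a polyOver Num.Def.real_num_pred) /\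
      (chebyshev m.+1 \is a polyOver Num.Def.real_num_pred) by case.
elim: m => [|m [IHm IHm1]]; first by rewrite /= rpred1 polyOverX.
by split=> //; rewrite chebyshevSS rpredB // rpredMn // rpredM // polyOverX.
Qed.

(* The Joukowski substitution y = (z + z^-1)/2 turns T_m into (z^m + z^-m)/2. *)
Lemma horner_chebyshev (z w : C) m : z * w = 1 ->
  (chebyshev m).[(z + w) / 2%:R] = (z ^+ m + w ^+ m) / 2%:R.
Proof.
move=> zw1; have two_neq0 : (2%:R : C) != 0 by rewrite pnatr_eq0.
suff: (chebyshev m).[(z + w) / 2%:R] = (z ^+ m + w ^+ m) / 2%:R /\
      (chebyshev m.+1).[(z + w) / 2%:R] = (z ^+ m.+1 + w ^+ m.+1) / 2%:R by case.
elim: m => [|m [IHm IHm1]].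
  by split; rewrite /= ?hornerC ?hornerX; field.
split=> //; rewrite chebyshevSS hornerD hornerN hornerMn hornerM hornerX IHm IHm1.
apply/eqP; rewrite -subr_eq0; apply/eqP.
transitivity ((z * w - 1) * (z ^+ m + w ^+ m) / 2%:R); first by rewrite !exprS; field.
by rewrite zw1 subrr !mul0r.
Qed.

Lemma norm_horner_chebyshev_le1 (y : C) m : y \is Num.real -> y ^+ 2 <= 1 ->
  `|(chebyshev m).[y]| <= 1.
Proof.
move=> yR y2le1; set s := sqrtC (1 - y ^+ 2).
have sR : s \is Num.real by rewrite sqrtC_real // subr_ge0.
set z := y + 'i * s.
have zw1 : z * z^* = 1.
  rewrite /z rmorphD rmorphM /= conjCi (CrealP yR) (CrealP sR).
  transitivity (y ^+ 2 - 'i ^+ 2 * s ^+ 2); first by ring.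
  by rewrite sqrCi sqrtCK; ring.
have normz : `|z| = 1 by apply/eqP; rewrite -sqrp_eq1 // normCK zw1.
have yE : y = (z + z^*) / 2%:R.
  by rewrite /z rmorphD rmorphM /= conjCi (CrealP yR) (CrealP sR); field.
rewrite yE horner_chebyshev // normrM normfV normr_nat ler_pdivrMr ?ltr0n // mul1r.
by rewrite (le_trans (ler_normD _ _)) // !normrX norm_conjC normz expr1n.
Qed.

Lemma horner_chebyshev_ge (z : C) m : 0 < z ->
  z ^+ m / 2%:R <= (chebyshev m).[(z + z^-1) / 2%:R].
Proof.
move=> z_gt0; rewrite horner_chebyshev ?divff ?gt_eqF //.
by rewrite ler_pM2r ?invr_gt0 ?ltr0n // lerDl exprn_ge0 // invr_ge0 ltW.
Qed.

(* The degenerate interval [a, a]: the ratio is 0 and (1 - x/a)^n does the job. *)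
Lemma residual_poly_point (a : C) n : 0 < a ->
  exists q : {poly C}, [/\ q \is a polyOver Num.real, (size q <= n.+1)%N, q.[0] = 1 &
    `|q.[a]| <= 2%:R * ((sqrtC (a / a) - 1) / (sqrtC (a / a) + 1)) ^+ n].
Proof.
move=> a_gt0; have a_neq0 : a != 0 by rewrite gt_eqF.
exists ((- a^-1) ^+ n *: ('X - a%:P) ^+ n); split.
- by rewrite polyOver_realE polyOverZ ?rpredX ?polyOverXsubC ?rpredN ?rpredV ?gtr0_real.
- by rewrite (leq_trans (size_scale_leq _ _)) // size_exp_XsubC.
- by rewrite hornerZ horner_exp hornerXsubC -exprMn sub0r mulrNN mulVf ?expr1n.
rewrite hornerZ horner_exp hornerXsubC subrr divff // sqrtC1 subrr mul0r.
by rewrite -exprMn mulr0 normrX normr0 ler_peMl ?ler1n ?exprn_ge0.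
Qed.

(* On the interval |T_n(Y x)| <= 1, while T_n(Y 0) >= z^n / 2. *)
Lemma chebyshev_comp_residual (Y : {poly C}) (z a b : C) n :
    Y \is a polyOver Num.real -> (size Y <= 2)%N -> 0 < z ->
    Y.[0] = (z + z^-1) / 2%:R ->
    (forall x, a <= x <= b -> Y.[x] \is Num.real) ->
    (forall x, a <= x <= b -> Y.[x] ^+ 2 <= 1) ->
  exists q : {poly C}, [/\ q \is a polyOver Num.real, (size q <= n.+1)%N, q.[0] = 1 &
    forall x, a <= x <= b -> `|q.[x]| <= 2%:R / z ^+ n].
Proof.
move=> YR Y_size z_gt0 Y0 YxR Yx_le1; set T := chebyshev n \Po Y.
have T0_ge : z ^+ n / 2%:R <= T.[0] by rewrite horner_comp Y0 horner_chebyshev_ge.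
have T0_gt0 : 0 < T.[0].
  by apply: lt_le_trans T0_ge; rewrite divr_gt0 ?exprn_gt0 ?ltr0n.
exists (T.[0]^-1 *: T); split.
- rewrite polyOver_realE polyOverZ ?rpredV ?gtr0_real // polyOver_comp //.
  by rewrite -polyOver_realE chebyshev_real.
- rewrite (leq_trans (size_scale_leq _ _)) // (leq_trans (size_comp_poly_leq _ _)) //.
  rewrite ltnS -[n in (_ <= n)%N]muln1.
  by apply: leq_mul; rewrite -subn1 leq_subLR ?size_chebyshev.
- by rewrite hornerZ mulVf ?gt_eqF.
move=> x x_ab; rewrite hornerZ normrM normfV (gtr0_norm T0_gt0).
have T_le1 : `|T.[x]| <= 1.
  by rewrite horner_comp norm_horner_chebyshev_le1 ?YxR ?Yx_le1.
apply: (@le_trans _ _ (T.[0]^-1 * 1)); first by apply: ler_wpM2l => //; rewrite invr_ge0 ltW.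
rewrite mulr1 -[2%:R / _]invf_div lef_pV2 ?posrE //.
by rewrite divr_gt0 ?exprn_gt0 ?ltr0n.
Qed.

(* The witness is the shifted Chebyshev polynomial T_n((b + a - 2x)/(b - a)),
   normalized at 0. *)
Lemma residual_poly_interval (a b : C) n : 0 < a -> a <= b ->
  exists q : {poly C}, [/\ q \is a polyOver Num.real, (size q <= n.+1)%N, q.[0] = 1 &
    forall x, a <= x <= b ->
      `|q.[x]| <= 2%:R * ((sqrtC (b / a) - 1) / (sqrtC (b / a) + 1)) ^+ n].
Proof.
move=> a_gt0 le_ab; have [<-|ne_ab] := eqVneq a b.
  have [q [qR qsize q0 qa]] := residual_poly_point n a_gt0.
  by exists q; split=> // x /andP[xa ax]; rewrite (@le_anti _ _ x a) ?xa ?ax.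
have lt_ab : a < b by rewrite lt_neqAle ne_ab.
have [aR bR] : a \is Num.real /\ b \is Num.real.
  by rewrite !gtr0_real // (lt_trans a_gt0).
have ba_neq0 : b - a != 0 by rewrite subr_eq0 eq_sym.
set t := sqrtC (b / a).
have t_gt1 : 1 < t.
  rewrite -sqrtC1 ltr_sqrtC ?qualifE /= ?ler01 ?ltr_pdivlMr ?mul1r //.
  by rewrite ltW // divr_gt0 // (lt_trans a_gt0).
have tm1_gt0 : 0 < t - 1 by rewrite subr_gt0.
have tp1_gt0 : 0 < t + 1 by rewrite addr_gt0 // (lt_trans ltr01).
set Y : {poly C} := (b - a)^-1 *: ((b + a)%:P - 'X *+ 2).
have hornerY x : Y.[x] = (b + a - x *+ 2) / (b - a).
  by rewrite hornerZ hornerD hornerN hornerMn hornerX hornerC mulrC.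
have YR : Y \is a polyOver Num.real.
  by rewrite polyOver_realE polyOverZ ?rpredV ?rpredB // ?rpredMn ?polyOverX // polyOverC rpredD.
have Y_size : (size Y <= 2)%N.
  rewrite (leq_trans (size_scale_leq _ _)) // (leq_trans (size_polyD _ _)) //.
  rewrite size_polyN geq_max (leq_trans (size_polyC_leq1 _)) // -scaler_nat.
  by rewrite (leq_trans (size_scale_leq _ _)) ?size_polyX.
have Y0 : Y.[0] = ((t + 1) / (t - 1) + ((t + 1) / (t - 1))^-1) / 2%:R.
  rewrite hornerY mul0rn subr0 invf_div.
  transitivity ((t ^+ 2 + 1) / (t ^+ 2 - 1)).
    by rewrite sqrtCK; field; rewrite gt_eqF // mulN1r.
  by field; rewrite !gt_eqF // sqrtCK subr_gt0 ltr_pdivlMr // mul1r.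
have YxR x : a <= x <= b -> Y.[x] \is Num.real.
  move=> /andP[ax _]; have xR : x \is Num.real by rewrite gtr0_real // (lt_le_trans a_gt0).
  by rewrite hornerY rpredM ?rpredV ?rpredB ?rpredD ?rpredMn.
have Yx_le1 x : a <= x <= b -> Y.[x] ^+ 2 <= 1.
  move=> /andP[ax xb]; have -> : Y.[x] ^+ 2 = 1 - 4%:R * (x - a) * (b - x) / (b - a) ^+ 2.
    by rewrite hornerY; field.
  by rewrite gerBl divr_ge0 ?exprn_ge0 ?mulr_ge0 ?ler0n ?subr_ge0 // ltW // subr_gt0.
have [q [qR q_size q0 q_small]] :=
  chebyshev_comp_residual n YR Y_size (divr_gt0 tp1_gt0 tm1_gt0) Y0 YxR Yx_le1.
by exists q; split=> // x /q_small; rewrite -exprVn invf_div.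
Qed.

End Chebyshev.

Section KrylovPoly.
Variables (C : numClosedFieldType) (n : nat).
Implicit Type c : 'I_n -> C.

Definition krylov_poly c : {poly C} := \sum_(j < n) c j *: 'X^j.

Lemma horner_krylov_poly c y : (krylov_poly c).[y] = \sum_(j < n) c j * y ^+ j.
Proof.
by rewrite /krylov_poly horner_sum; apply: eq_bigr => j _; rewrite hornerZ hornerXn.
Qed.

Lemma krylov_polyZ t c : krylov_poly (fun j => t * c j) = t *: krylov_poly c.
Proof. by rewrite /krylov_poly scaler_sumr; apply: eq_bigr => j _; rewrite scalerA. Qed.

Lemma krylov_poly_real c y : (forall j, c j \is Num.real) -> y \is Num.real ->
  (krylov_poly c).[y] \is Num.real.
Proof.
by move=> cR yR; rewrite horner_krylov_poly rpred_sum // => j _; rewrite rpredM ?rpredX.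
Qed.

Lemma krylov_poly_residual (q : {poly C}) y : (size q <= n.+1)%N -> q.[0] = 1 ->
  1 - y * (krylov_poly (fun j => - q`_j.+1)).[y] = q.[y].
Proof.
move=> q_size q0; rewrite (horner_coef_wide _ q_size) big_ord_recl expr0 mulr1.
rewrite -horner_coef0 q0 horner_krylov_poly mulr_sumr -sumrN; congr (_ + _).
by apply: eq_bigr => j _; rewrite exprS /bump /=; ring.
Qed.

End KrylovPoly.

Section RealBigMinMax.
Variables (R : numDomainType) (I : eqType) (r : seq I) (P : pred I) (F : I -> R) (x0 : R).
Hypotheses (x0_real : x0 \is Num.real) (F_real : forall i, F i \is Num.real).

Lemma real_le_bigmax j : j \in r -> P j -> F j <= \big[Num.max/x0]_(i <- r | P i) F i.
Proof.
elim: r => // i s IHs; rewrite big_cons inE.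
have MR : \big[Num.max/x0]_(i <- s | P i) F i \is Num.real by exact: bigmax_real.
move=> /orP[/eqP-> Pi|js Pj]; first by rewrite Pi maxEle; case: ifP.
case: ifP => _; last exact: IHs.
apply: le_trans (IHs js Pj) _; rewrite maxEle; case: ifP => // /negbT.
by rewrite -real_ltNge // => /ltW.
Qed.

Lemma real_bigmin_le j : j \in r -> P j -> \big[Num.min/x0]_(i <- r | P i) F i <= F j.
Proof.
elim: r => // i s IHs; rewrite big_cons inE.
have mR : \big[Num.min/x0]_(i <- s | P i) F i \is Num.real by exact: bigmin_real.
move=> /orP[/eqP-> Pi|js Pj].
  by rewrite Pi minEle; case: ifP => // /negbT; rewrite -real_ltNge // => /ltW.
case: ifP => _; last exact: IHs.
by apply: le_trans (IHs js Pj); rewrite minEle; case: ifP.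
Qed.

End RealBigMinMax.

Section Spectrum.
Variables (C : numClosedFieldType) (d : nat) (p : 'I_d -> C).
Hypothesis p_ge0 : forall k, 0 <= p k.

Let p_real k : p k \is Num.real := ger0_real (p_ge0 k).

Lemma le_p_max k : p k <= p_max p.
Proof. by apply: real_le_bigmax; rewrite ?real0 ?mem_index_enum. Qed.

Lemma p_min_le k : p k != 0 -> p_min p <= p k.
Proof.
by move=> pk_neq0; apply: real_bigmin_le; rewrite ?bigmax_real ?real0 ?mem_index_enum.
Qed.

Lemma p_min_gt0 k : p k != 0 -> 0 < p_min p.
Proof.
move=> pk_neq0; have p_pos i : p i != 0 -> 0 < p i by rewrite lt_def p_ge0 andbT.
rewrite /p_min; elim/big_ind: _ => //.
  exact: lt_le_trans (p_pos k pk_neq0) (le_p_max k).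
by move=> x y x_gt0 y_gt0; rewrite minEle; case: ifP.
Qed.

(* For singular rho a pair with p l = 0 < p k has mean p k / 2: this is the
   origin of the factor 2 in [kappa]. *)
Definition kappa_floor : C :=
  if [forall k, p k != 0] then p_min p else p_min p / 2%:R.

Lemma kappaE k : p k != 0 -> kappa p = p_max p / kappa_floor.
Proof.
move=> pk_neq0; have := p_min_gt0 pk_neq0; rewrite /kappa /kappa_floor.
by case: ifP => // _ /gt_eqF pmin_neq0; field; rewrite pmin_neq0.
Qed.

Lemma kappa_floor_gt0 k : p k != 0 -> 0 < kappa_floor.
Proof.
move=> /p_min_gt0 pmin_gt0; rewrite /kappa_floor.
by case: ifP => // _; rewrite divr_gt0 ?ltr0n.
Qed.

Lemma kappa_floor_le_mean k l : p k != p l -> kappa_floor <= (p k + p l) / 2%:R.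
Proof.
rewrite /kappa_floor; case: ifP => [/forallP p_neq0 _|_ pkl].
  by rewrite ler_pdivlMr ?ltr0n // mulr_natr mulr2n lerD ?p_min_le.
rewrite ler_pM2r ?invr_gt0 ?ltr0n //.
have [pk0|pk_neq0] := eqVneq (p k) 0.
  by rewrite pk0 add0r p_min_le // -pk0 eq_sym.
by rewrite (le_trans (p_min_le pk_neq0)) // lerDl.
Qed.

Lemma kappa_floor_le_p_max k : p k != 0 -> kappa_floor <= p_max p.
Proof.
move=> pk_neq0; have pmin_gt0 := p_min_gt0 pk_neq0.
have pmin_le : p_min p <= p_max p := le_trans (p_min_le pk_neq0) (le_p_max k).
rewrite /kappa_floor; case: ifP => // _; apply: le_trans pmin_le.
by rewrite ler_pdivrMr ?ltr0n // ler_peMr ?ler1n // ltW.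
Qed.

Lemma mean_le_p_max k l : (p k + p l) / 2%:R <= p_max p.
Proof.
by rewrite ler_pdivrMr ?ltr0n // mulr_natr mulr2n lerD ?le_p_max.
Qed.

End Spectrum.

Section DiscreteL2.
Variables (C : numClosedFieldType) (I : finType) (mu x : I -> C).
Hypothesis mu_ge0 : forall i, 0 <= mu i.

Definition l2dot (f g : C -> C) : C := \sum_i mu i * (f (x i) * g (x i)).

Local Notation real_on f := (forall i, f (x i) \is Num.real).

Lemma eq_l2dot f f' g g' : f =1 f' -> g =1 g' -> l2dot f g = l2dot f' g'.
Proof. by move=> ff' gg'; apply: eq_bigr => i _; rewrite ff' gg'. Qed.

Lemma l2dot_ge0 f : real_on f -> 0 <= l2dot f f.
Proof.
by move=> fR; apply: sumr_ge0 => i _; rewrite mulr_ge0 // -expr2 real_exprn_even_ge0.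
Qed.

Lemma l2dot_real f g : real_on f -> real_on g -> l2dot f g \is Num.real.
Proof.
by move=> fR gR; apply: rpred_sum => i _; rewrite !rpredM //; exact: ger0_real.
Qed.

Lemma l2dot_expand f g t :
  l2dot (fun y => f y + t * g y) (fun y => f y + t * g y) =
  l2dot f f + 2%:R * t * l2dot f g + t ^+ 2 * l2dot g g.
Proof.
rewrite /l2dot !mulr_sumr -!big_split; apply: eq_bigr => i _ /=; ring.
Qed.

(* With A = <e, g> and B = <g, g>, the choice t = -A/(B + 1) gives the increment
   2 t A + t^2 B = -A^2 (B + 2)/(B + 1)^2, which must then vanish. *)
Lemma l2dot_orthogonal e g : real_on e -> real_on g ->
    (forall t, t \is Num.real ->
       l2dot e e <= l2dot (fun y => e y + t * g y) (fun y => e y + t * g y)) ->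
  l2dot e g = 0.
Proof.
move=> eR gR emin; set A := l2dot e g; set B := l2dot g g.
have AR : A \is Num.real by exact: l2dot_real.
have B_ge0 : 0 <= B by exact: l2dot_ge0.
have B1_gt0 : 0 < B + 1 by rewrite ltr_wpDl.
have tR : - A / (B + 1) \is Num.real.
  by rewrite rpredM ?rpredN // rpredV rpredD ?rpred1 // ger0_real.
have := emin _ tR; rewrite l2dot_expand -addrA lerDl.
have -> : 2%:R * (- A / (B + 1)) * A + (- A / (B + 1)) ^+ 2 * B =
          - (A ^+ 2 * (B + 2%:R) / (B + 1) ^+ 2).
  by field; rewrite gt_eqF.
rewrite oppr_ge0 => quad_le0.
have B2_gt0 : 0 < B + 2%:R by rewrite ltr_wpDl ?ltr0n.
have quad_ge0 : 0 <= A ^+ 2 * (B + 2%:R) / (B + 1) ^+ 2.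
  apply: divr_ge0; last exact: exprn_ge0 (ltW B1_gt0).
  by apply: mulr_ge0; [exact: real_exprn_even_ge0 | exact: ltW].
have /eqP : A ^+ 2 * (B + 2%:R) / (B + 1) ^+ 2 = 0 by apply/le_anti; rewrite quad_le0.
by rewrite !mulf_eq0 invr_eq0 !expf_eq0 /= (gt_eqF B2_gt0) (gt_eqF B1_gt0) !orbF orbb => /eqP.
Qed.

Lemma l2dot_pythagoras f g : real_on f -> real_on g ->
    (forall t, t \is Num.real ->
       l2dot (fun y => f y - g y) (fun y => f y - g y) <=
       l2dot (fun y => f y - g y + t * g y) (fun y => f y - g y + t * g y)) ->
  l2dot f f = l2dot (fun y => f y - g y) (fun y => f y - g y) + l2dot g g.
Proof.
move=> fR gR fg_min.
have fg_orth := l2dot_orthogonal (fun i => rpredB (fR i) (gR i)) gR fg_min.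
have fE y : f y = f y - g y + 1 * g y by rewrite mul1r subrK.
by rewrite (eq_l2dot fE fE) l2dot_expand fg_orth mulr0 addr0 expr1n mul1r.
Qed.

Lemma l2dot_le_scale f g c : 0 <= c -> real_on f -> real_on g ->
    (forall i, mu i != 0 -> `|f (x i)| <= c * `|g (x i)|) ->
  l2dot f f <= c ^+ 2 * l2dot g g.
Proof.
move=> c_ge0 fR gR fg; rewrite /l2dot mulr_sumr; apply: ler_sum => i _.
have [->|mu_neq0] := eqVneq (mu i) 0; first by rewrite !mul0r mulr0.
rewrite [X in _ <= X]mulrCA; apply: ler_wpM2l => //.
rewrite -!expr2 -(real_normK (fR i)) -(real_normK (gR i)) -exprMn.
by rewrite ler_sqr ?nnegrE ?mulr_ge0 ?fg.
Qed.

End DiscreteL2.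

Section EigenFrame.
Variables (C : numClosedFieldType) (d : nat) (U H : 'M[C]_d) (p : 'I_d -> C).
Hypotheses (U_unitary : U \is unitarymx) (p_ge0 : forall k, 0 <= p k)
  (H_herm : H \is hermsymmx).

Local Notation rho := (spec_mx U p).

Let UUt : U *m U ^t* = 1%:M.
Proof. exact/unitarymxP. Qed.

Let UtU : U ^t* *m U = 1%:M.
Proof. by have /unitarymxP := etrans (trmxC_unitary U) U_unitary; rewrite trmxCK. Qed.

Definition frame (X : 'M[C]_d) := U ^t* *m X *m U.

Lemma melE X k l : mel U X k l = frame X k l.
Proof. by []. Qed.

Lemma frameD X Y : frame (X + Y) = frame X + frame Y.
Proof. by rewrite /frame mulmxDr mulmxDl. Qed.

Lemma frameB X Y : frame (X - Y) = frame X - frame Y.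
Proof. by rewrite /frame mulmxBr mulmxBl. Qed.

Lemma melB X Y k l : mel U (X - Y) k l = mel U X k l - mel U Y k l.
Proof. by rewrite !melE frameB !mxE. Qed.

Lemma frameZ a X : frame (a *: X) = a *: frame X.
Proof. by rewrite /frame -scalemxAr -scalemxAl. Qed.

Lemma frameM X Y : frame (X *m Y) = frame X *m frame Y.
Proof. by rewrite /frame -!mulmxA (mulmxA U) UUt mul1mx. Qed.

Lemma frame_spec : frame rho = diag_mx (\row_k p k).
Proof. by rewrite /frame /spec_mx !mulmxA UtU mul1mx -mulmxA UtU mulmx1. Qed.

Lemma mxtrace_frame X : \tr (frame X) = \tr X.
Proof. by rewrite /frame mxtrace_mulC mulmxA UUt mul1mx. Qed.

Lemma mel_sum n (c : 'I_n -> C) (M : 'I_n -> 'M[C]_d) k l :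
  mel U (\sum_(j < n) c j *: M j) k l = \sum_(j < n) c j * mel U (M j) k l.
Proof.
rewrite melE /frame mulmx_sumr mulmx_suml summxE; apply: eq_bigr => j _.
by rewrite -scalemxAr -scalemxAl mxE.
Qed.

Lemma mel_herm X k l : X \is hermsymmx -> mel U X l k = (mel U X k l)^*.
Proof.
move=> /is_hermitianmxP; rewrite expr0 scale1r => XE.
have frameXE : (frame X)^t* = frame X.
  by rewrite /frame !trmx_mul !map_mxM trmxCK -XE mulmxA.
by rewrite !melE -[in LHS]frameXE !mxE.
Qed.

(* The eigenvalue of [R_rho rho] on |k><l|. *)
Definition eigR k l := (p k + p l) / 2%:R.

Lemma eigR_sym k l : eigR l k = eigR k l.
Proof. by rewrite /eigR addrC. Qed.

Lemma mel_R_rho X k l : mel U (R_rho rho X) k l = eigR k l * mel U X k l.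
Proof.
rewrite !melE /R_rho frameZ frameD (frameM rho) (frameM X) frame_spec.
by rewrite mul_diag_mx mul_mx_diag !mxE /eigR; ring.
Qed.

Lemma mel_icomm X k l : mel U (icomm rho X) k l = 'i * (p k - p l) * mel U X k l.
Proof.
rewrite !melE /icomm frameZ frameB (frameM rho) (frameM X) frame_spec.
by rewrite mul_diag_mx mul_mx_diag !mxE; ring.
Qed.

Lemma mel_iter_R_rho j X k l :
  mel U (iter j (R_rho rho) X) k l = eigR k l ^+ j * mel U X k l.
Proof.
elim: j => [|j IHj]; first by rewrite mul1r.
by rewrite iterS mel_R_rho IHj exprS mulrA.
Qed.

Lemma ip_rho_mel X Y :
  ip_rho rho X Y = \sum_k \sum_l eigR k l * (mel U X k l * mel U Y l k).
Proof.
rewrite /mel -/(frame X) -/(frame Y) /ip_rho -mxtrace_frame (frameM rho) frameZ.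
rewrite frameD (frameM X) (frameM Y) frame_spec; set X' := frame X; set Y' := frame Y.
transitivity (\sum_k \sum_l
  (p k / 2%:R * (X' k l * Y' l k) + p k / 2%:R * (Y' k l * X' l k))).
  rewrite /mxtrace; apply: eq_bigr => k _.
  by rewrite mul_diag_mx !mxE big_split -!mulr_sumr /=; ring.
under eq_bigr do rewrite big_split.
rewrite big_split /= [X in _ + X]exchange_big /= -big_split /=.
by apply: eq_bigr => k _; rewrite -big_split; apply: eq_bigr => l _ /=; rewrite /eigR; ring.
Qed.

Definition gen k l := mel U (icomm rho H) k l.

Lemma gen_conj k l : gen l k = (gen k l)^*.
Proof.
have pR i : (p i)^* = p i by apply/CrealP/ger0_real.
rewrite /gen !mel_icomm mel_herm // !rmorphM /= rmorphB /= conjCi !pR; ring.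
Qed.

Definition weight (i : 'I_d * 'I_d) := eigR i.1 i.2 * `|gen i.1 i.2| ^+ 2.
Definition point (i : 'I_d * 'I_d) := eigR i.1 i.2.

Local Notation dot := (l2dot weight point).

Lemma eigR_ge0 k l : 0 <= eigR k l.
Proof. by rewrite divr_ge0 ?ler0n ?addr_ge0. Qed.

Lemma weight_ge0 i : 0 <= weight i.
Proof. by rewrite mulr_ge0 ?eigR_ge0 ?exprn_ge0. Qed.

Lemma point_real i : point i \is Num.real.
Proof. exact/ger0_real/eigR_ge0. Qed.

Lemma ip_rho_profile X Y f g :
    (forall k l, mel U X k l = f (eigR k l) * gen k l) ->
    (forall k l, mel U Y k l = g (eigR k l) * gen k l) ->
  ip_rho rho X Y = dot f g.
Proof.
move=> XE YE; rewrite ip_rho_mel pair_bigA; apply: eq_bigr => -[k l] _ /=.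
by rewrite XE YE (eigR_sym k l) (gen_conj k l) /weight /point normCK /=; ring.
Qed.

Lemma norm_rho_profile X f :
    (forall k l, mel U X k l = f (eigR k l) * gen k l) ->
  norm_rho rho X ^+ 2 = dot f f.
Proof. by move=> XE; rewrite /norm_rho sqrtCK; exact: ip_rho_profile. Qed.

Lemma mel_krylov n (c : 'I_n -> C) k l :
  mel U (\sum_(j < n) c j *: iter j (R_rho rho) (icomm rho H)) k l =
  (krylov_poly c).[eigR k l] * gen k l.
Proof.
rewrite mel_sum horner_krylov_poly mulr_suml; apply: eq_bigr => j _.
by rewrite mel_iter_R_rho mulrA.
Qed.

(* For p k = p l = 0 the entry vanishes by the constraint defining the space
   of [L], in agreement with the convention 0^-1 = 0. *)
Lemma mel_SLD L k l : is_SLD U p rho H L -> mel U L k l = (eigR k l)^-1 * gen k l.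
Proof.
move=> [[_ L0] RL]; have [eigR0|eigR_neq0] := eqVneq (eigR k l) 0; last first.
  by rewrite /gen -RL mel_R_rho mulKf.
move/eqP: eigR0; rewrite /eigR mulf_eq0 invr_eq0 pnatr_eq0 orbF paddr_eq0 //.
by move=> /andP[/eqP pk0 /eqP pl0]; rewrite L0 // pk0 pl0 add0r mul0r invr0 mul0r.
Qed.

(* Terms with p k + p l = 0 are excluded from QFI; on the right they vanish
   because eigR k l = 0. *)
Lemma QFI_l2dot : QFI U p H = dot (fun y => y^-1) (fun y => y^-1).
Proof.
rewrite /QFI mulr_sumr; under eq_bigr do rewrite big_mkcond mulr_sumr.
rewrite pair_bigA; apply: eq_bigr => -[k l] _ /=.
have pkl_real : p k - p l \is Num.real by rewrite rpredB ?ger0_real.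
rewrite /weight /point /gen /= mel_icomm !normrM normCi mul1r exprMn (real_normK pkl_real).
case: ifP => [pkl_gt0|]; first by rewrite /eigR; field; rewrite gt_eqF.
rewrite lt_def paddr_eq0 ?addr_ge0 // andbT => /negbFE /andP[/eqP pk0 /eqP pl0].
by rewrite /eigR pk0 pl0 addr0 mul0r invr0 !mulr0.
Qed.

Lemma eigR_gt0 k l : p k != p l -> 0 < eigR k l.
Proof.
move=> pkl; rewrite divr_gt0 ?ltr0n // lt_def addr_ge0 // andbT paddr_eq0 //.
by apply: contraNN pkl => /andP[/eqP-> /eqP->].
Qed.

Lemma weight_neq0 i : weight i != 0 -> p i.1 != p i.2.
Proof.
apply: contraNneq => pE.
by rewrite /weight /gen mel_icomm pE subrr mulr0 mul0r normr0 expr0n mulr0.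
Qed.

Section BestApproximation.
Variables (n : nat) (L Ln : 'M[C]_d).
Hypotheses (L_SLD : is_SLD U p rho H L) (Ln_best : is_krylov_approx rho H n L Ln).
Implicit Types c : 'I_n -> C.

Local Notation krylov c := (\sum_(j < n) c j *: iter j (R_rho rho) (icomm rho H)).
Local Notation residual c := (fun y => y^-1 - (krylov_poly c).[y]).

Lemma residual_real c : (forall j, c j \is Num.real) ->
  forall i, residual c (point i) \is Num.real.
Proof.
by move=> cR i; rewrite rpredB ?rpredV ?krylov_poly_real ?point_real.
Qed.

Lemma norm_rho_sub_krylov c :
  norm_rho rho (L - krylov c) ^+ 2 = dot (residual c) (residual c).
Proof.
apply: norm_rho_profile => k l.
by rewrite melB (mel_SLD _ _ L_SLD) mel_krylov mulrBl.
Qed.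

Lemma norm_rho_sub_best_le c : (forall j, c j \is Num.real) ->
  norm_rho rho (L - Ln) ^+ 2 <= norm_rho rho (L - krylov c) ^+ 2.
Proof.
move=> cR; have [[c0 [c0R ->]] Ln_min] := Ln_best.
have norm_ge0 c' : (forall j, c' j \is Num.real) -> 0 <= norm_rho rho (L - krylov c').
  move=> c'R; rewrite sqrtC_ge0 -[ip_rho _ _ _]sqrtCK -/(norm_rho _ _).
  by rewrite norm_rho_sub_krylov; apply: l2dot_ge0; [exact: weight_ge0 | exact: residual_real].
by rewrite lerXn2r ?nnegrE ?norm_ge0 // Ln_min //; exists c.
Qed.

Lemma QFI_sub_best :
  `|norm_rho rho Ln ^+ 2 - QFI U p H| = norm_rho rho (L - Ln) ^+ 2.
Proof.
have [[c0 [c0R Ln_E]] _] := Ln_best.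
have err_E : norm_rho rho (L - Ln) ^+ 2 = dot (residual c0) (residual c0).
  by rewrite Ln_E norm_rho_sub_krylov.
have Ln_norm :
    norm_rho rho Ln ^+ 2 = dot (horner (krylov_poly c0)) (horner (krylov_poly c0)).
  by rewrite Ln_E; exact: norm_rho_profile (mel_krylov c0).
have P0R i : (krylov_poly c0).[point i] \is Num.real by rewrite krylov_poly_real ?point_real.
have invR i : (point i)^-1 \is Num.real by rewrite rpredV point_real.
rewrite err_E Ln_norm QFI_l2dot (l2dot_pythagoras weight_ge0 invR P0R) /=; last first.
  move=> t tR.
  (* The competitor is [(1 - t) Ln], still in the Krylov space. *)
  have resE y : y^-1 - (krylov_poly c0).[y] + t * (krylov_poly c0).[y] =
                y^-1 - (krylov_poly (fun j => (1 - t) * c0 j)).[y].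
    by rewrite krylov_polyZ hornerZ; ring.
  rewrite (eq_l2dot _ _ resE resE) -err_E -norm_rho_sub_krylov.
  by apply: norm_rho_sub_best_le => j; rewrite rpredM ?rpredB ?rpred1.
rewrite opprD addrCA subrr addr0 normrN ger0_norm //.
by apply: l2dot_ge0; [exact: weight_ge0 | exact: residual_real].
Qed.

Lemma norm_rho_sub_best_residual (q : {poly C}) eps :
    q \is a polyOver Num.real -> (size q <= n.+1)%N -> q.[0] = 1 -> 0 <= eps ->
    (forall k l, p k != p l -> `|q.[eigR k l]| <= eps) ->
  norm_rho rho (L - Ln) ^+ 2 <= eps ^+ 2 * QFI U p H.
Proof.
move=> /polyOverP qR q_size q0 eps_ge0 q_small.
pose c (j : 'I_n) := - q`_j.+1.
have cR j : c j \is Num.real by rewrite rpredN qR.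
apply: le_trans (norm_rho_sub_best_le cR) _.
rewrite norm_rho_sub_krylov QFI_l2dot; apply: l2dot_le_scale => //.
- exact: weight_ge0.
- exact: residual_real.
- by move=> i; rewrite rpredV point_real.
move=> [k l] /weight_neq0 /= pkl; rewrite /point /=.
have x_neq0 : eigR k l != 0 by rewrite gt_eqF ?eigR_gt0.
have -> : (eigR k l)^-1 - (krylov_poly c).[eigR k l] = q.[eigR k l] * (eigR k l)^-1.
  by rewrite -(krylov_poly_residual _ q_size q0); field.
by rewrite normrM ler_wpM2r ?q_small.
Qed.

End BestApproximation.

End EigenFrame.

Theorem theorem1 (C : numClosedFieldType) (d : nat) (rho H U : 'M[C]_d)
    (p : 'I_d -> C) (n : nat) (L Ln : 'M[C]_d) :
  U \is unitarymx ->
  (forall k, 0 <= p k) -> \sum_(k < d) p k = 1 ->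
  rho = spec_mx U p ->
  H \is hermsymmx ->
  0 < QFI U p H ->
  (1 <= n)%N ->
  is_SLD U p rho H L ->
  is_krylov_approx rho H n L Ln ->
  `|norm_rho rho Ln ^+ 2 - QFI U p H| / QFI U p H
    <= 4%:R * ((sqrtC (kappa p) - 1) / (sqrtC (kappa p) + 1)) ^+ (2 * n).
Proof.
(* The bound also holds for n = 0. *)
move=> U_unitary p_ge0 p_sum1 -> H_herm F_gt0 _ L_SLD Ln_best.
have [k0 pk0_neq0] : exists k, p k != 0.
  apply/existsP; rewrite -negb_forall; apply: contra_eqN p_sum1 => /forallP p0.
  by rewrite big1 1?eq_sym ?oner_eq0 // => k _; apply/eqP/p0.
have floor_le_max := kappa_floor_le_p_max p_ge0 pk0_neq0.
have [q [qR q_size q0 q_small]] :=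
  residual_poly_interval n (kappa_floor_gt0 p_ge0 pk0_neq0) floor_le_max.
rewrite (QFI_sub_best U_unitary p_ge0 H_herm L_SLD Ln_best) (kappaE p_ge0 pk0_neq0).
rewrite ler_pdivrMr // -[4%:R]/((2 * 2)%:R) natrM mulnC exprM -expr2 -exprMn.
apply: (norm_rho_sub_best_residual U_unitary p_ge0 H_herm L_SLD Ln_best qR q_size q0).
  apply: le_trans (normr_ge0 _) (q_small (p_max p) _).
  by rewrite lexx andbT.
by move=> k l pkl; rewrite q_small // kappa_floor_le_mean // mean_le_p_max.
Qed.
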